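(* Let $\rho_1, \sigma_1$ be density operators on $\mathbb{C}^{d_1}$ and $\rho_2, \sigma_2$ density operators on $\mathbb{C}^{d_2}$. If either $D_{\min}(\rho_1\|\sigma_1)\ge D_{\max}(\rho_2\|\sigma_2)$ or $D_{\min}(\sigma_1\|\rho_1)\ge D_{\max}(\sigma_2\|\rho_2)$, then there exists a test-and-prepare channel $\mathcal{E}$ such that $\mathcal{E}(\rho_1)=\rho_2$ and $\mathcal{E}(\sigma_1)=\sigma_2$.
   Context: Logarithms are base 2. For density operators $\rho,\sigma$: $D_{\min}(\rho\|\sigma) := -\log \mathrm{tr}(\sigma \Pi_\rho)$, where $\Pi_\rho$ is the projector onto the support of $\rho$; $D_{\max}(\rho\|\sigma) := \inf\{\lambda\in\mathbb{R} : \rho \le 2^{\lambda}\sigma\}$ in the Löwner order (with $\inf\emptyset=+\infty$). A test-and-prepare channel is a map of the form $\mathcal{E}(X)=\gamma_1\,\mathrm{tr}(EX)+\gamma_2\,\mathrm{tr}((\mathds{1}-E)X)$ where $\gamma_1,\gamma_2$ are density operators and $0\le E\le \mathds{1}$. *)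

From HB Require Import structures.
From mathcomp Require Import all_boot all_order all_algebra.
From mathcomp Require Import complex.
From mathcomp Require Import all_classical all_reals.
From mathcomp Require Import ereal exp.
Set Implicit Arguments. Unset Strict Implicit. Unset Printing Implicit Defensive.
Import Order.TTheory GRing.Theory Num.Theory.
Local Open Scope ring_scope.
Local Open Scope complex_scope.

Section QDefs.
Variable R : realType.
Local Notation C := R[i].

Definition adj {m n : nat} (A : 'M[C]_(m, n)) : 'M[C]_(n, m) :=
  map_mx (@conjc R) A^T.

(* positive semidefinite: <v, A v> is real and >= 0 for every vector v
   (the order on R[i] is: 0 <= z iff z is real and nonnegative) *)
Definition psd {n : nat} (A : 'M[C]_n) : Prop :=
  forall v : 'cV[C]_n, 0 <= (adj v *m A *m v) 0 0.

Definition lowner {n : nat} (A B : 'M[C]_n) : Prop := psd (B - A).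

Definition density {n : nat} (rho : 'M[C]_n) : Prop :=
  psd rho /\ \tr rho = 1.

(* P is the orthogonal projector onto the support (range) of rho:
   P hermitian, idempotent, and with the same range as rho
   (for hermitian matrices row space and range agree up to conjugation,
   so equality of row spaces expresses equality of ranges) *)
Definition is_supp_proj {n : nat} (rho P : 'M[C]_n) : Prop :=
  adj P = P /\ P *m P = P /\ (P == rho)%MS.

Definition supp_proj {n : nat} (rho : 'M[C]_n) : 'M[C]_n :=
  xget 0 [set P | is_supp_proj rho P].

Definition log2 (x : R) : R := ln x / ln 2.

Definition Dmin {n : nat} (rho sigma : 'M[C]_n) : \bar R :=
  let t := complex.Re (\tr (sigma *m supp_proj rho)) in
  if t == 0 then +oo%E else (- log2 t)%:E.

Definition Dmax {n : nat} (rho sigma : 'M[C]_n) : \bar R :=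
  ereal_inf [set (lam%:E) | lam in [set lam : R | lowner rho (((2 : R) `^ lam)%:C *: sigma)]].

Definition test_prepare {d1 d2 : nat} (g1 g2 : 'M[C]_d2) (E : 'M[C]_d1)
  (X : 'M[C]_d1) : 'M[C]_d2 :=
  \tr (E *m X) *: g1 + \tr ((1%:M - E) *m X) *: g2.

Definition is_test_prepare {d1 d2 : nat} (Ch : 'M[C]_d1 -> 'M[C]_d2) : Prop :=
  exists (g1 g2 : 'M[C]_d2) (E : 'M[C]_d1),
    density g1 /\ density g2 /\ psd E /\ lowner E 1%:M /\
    Ch = test_prepare g1 g2 E.

End QDefs.

(* Let Q be the support projector of rho1 and t = tr(sigma1 Q), so that
   D_min(rho1||sigma1) = -log t.  Measuring {Q, 1 - Q} gives outcome Q with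
   certainty on rho1 and with probability t on sigma1.  The infimum defining
   D_max is attained, so D_max(rho2||sigma2) <= -log t says t rho2 <= sigma2;
   hence sigma2 = t rho2 + (1 - t) gamma for a density gamma, and preparing
   rho2 on outcome Q and gamma otherwise maps (rho1, sigma1) to
   (rho2, sigma2).  The second hypothesis is the first one for the swapped
   pairs (sigma1, rho1) and (sigma2, rho2). *)
From HB Require Import structures.
From mathcomp Require Import all_boot all_order all_algebra.
From mathcomp Require Import complex.
From mathcomp Require Import all_classical all_reals.
From mathcomp Require Import ereal exp.
From mathcomp Require Import spectral.
From mathcomp Require Import ring.
Import Order.TTheory GRing.Theory Num.Theory.
Local Open Scope ring_scope.
Local Open Scope complex_scope.

Set Implicit Arguments.
Unset Strict Implicit.

Section QuantumStates.
Variable R : realType.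
Local Notation C := R[i].
Local Notation qform A v := ((adj v *m A *m v) 0 0).

Lemma adjM m n p (A : 'M[C]_(m, n)) (B : 'M[C]_(n, p)) :
  adj (A *m B) = adj B *m adj A.
Proof. by rewrite /adj trmx_mul map_mxM. Qed.

Lemma adjK m n (A : 'M[C]_(m, n)) : adj (adj A) = A.
Proof. by apply/matrixP => i j; rewrite !mxE conjcK. Qed.

Lemma adjD m n (A B : 'M[C]_(m, n)) : adj (A + B) = adj A + adj B.
Proof. by apply/matrixP => i j; rewrite !mxE rmorphD. Qed.

Lemma adjN m n (A : 'M[C]_(m, n)) : adj (- A) = - adj A.
Proof. by apply/matrixP => i j; rewrite !mxE rmorphN. Qed.

Lemma adjZ m n (c : C) (A : 'M[C]_(m, n)) : adj (c *: A) = c^* *: adj A.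
Proof. by apply/matrixP => i j; rewrite !mxE rmorphM. Qed.

Lemma adj1 n : adj (1%:M : 'M[C]_n) = 1%:M.
Proof.
by apply/matrixP => i j; rewrite !mxE eq_sym; case: eqP; rewrite ?conjc1 ?conjc0.
Qed.

Lemma adj_delta n (k : 'I_n) : adj (delta_mx k 0 : 'cV[C]_n) = delta_mx 0 k.
Proof. by apply/matrixP => i j; rewrite !mxE andbC conjc_nat. Qed.

Lemma qformD n (A B : 'M[C]_n) (v : 'cV[C]_n) :
  qform (A + B) v = qform A v + qform B v.
Proof. by rewrite mulmxDr mulmxDl mxE. Qed.

Lemma qformB n (A B : 'M[C]_n) (v : 'cV[C]_n) :
  qform (A - B) v = qform A v - qform B v.
Proof. by rewrite mulmxBr mulmxBl !mxE. Qed.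

Lemma qformZ n (c : C) (A : 'M[C]_n) (v : 'cV[C]_n) :
  qform (c *: A) v = c * qform A v.
Proof. by rewrite -scalemxAr -scalemxAl mxE. Qed.

Lemma qform_delta n (A : 'M[C]_n) (k l : 'I_n) :
  (adj (delta_mx k 0 : 'cV[C]_n) *m A *m (delta_mx l 0 : 'cV[C]_n)) 0 0 = A k l.
Proof. by rewrite adj_delta -rowE -colE !mxE. Qed.

Lemma qform_pair n (A : 'M[C]_n) (i j : 'I_n) (c : C) :
  qform A (delta_mx i 0 + c *: delta_mx j 0 : 'cV[C]_n)
  = A i i + c * A i j + c^* * A j i + c^* * c * A j j.
Proof.
have addE (X Y : 'M[C]_1) : (X + Y) 0 0 = X 0 0 + Y 0 0 by rewrite mxE.
have scaleE d (X : 'M[C]_1) : (d *: X) 0 0 = d * X 0 0 by rewrite mxE.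
rewrite adjD adjZ !mulmxDl !mulmxDr -!scalemxAl -!scalemxAr !addE !scaleE.
by rewrite !qform_delta mulrA; ring.
Qed.

Lemma psdD n (A B : 'M[C]_n) : psd A -> psd B -> psd (A + B).
Proof. by move=> hA hB v; rewrite qformD addr_ge0. Qed.

Lemma psdZ n (c : C) (A : 'M[C]_n) : 0 <= c -> psd A -> psd (c *: A).
Proof. by move=> c_ge0 hA v; rewrite qformZ mulr_ge0. Qed.

Lemma psd_gram m n (M : 'M[C]_(m, n)) : psd (adj M *m M).
Proof.
move=> v; rewrite mulmxA -adjM -mulmxA mxE; apply: sumr_ge0 => k _.
by rewrite !mxE mulrC mul_conjC_ge0.
Qed.

Lemma psd_conj m n (A : 'M[C]_m) (M : 'M[C]_(m, n)) :
  psd A -> psd (adj M *m A *m M).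
Proof. by move=> hA v; rewrite !mulmxA -adjM -!mulmxA (mulmxA _ A). Qed.

Lemma psd_diag_ge0 n (A : 'M[C]_n) i : psd A -> 0 <= A i i.
Proof. by move=> hA; rewrite -qform_delta. Qed.

Lemma psd_tr_ge0 n (A : 'M[C]_n) : psd A -> 0 <= \tr A.
Proof. by move=> hA; apply: sumr_ge0 => i _; apply: psd_diag_ge0. Qed.

Lemma psd_qform_real n (A : 'M[C]_n) (v : 'cV[C]_n) :
  psd A -> (complex.Re (qform A v))%:C = qform A v.
Proof. by move=> hA; rewrite RRe_real // ger0_real. Qed.

Lemma psd_Re_qform_ge0 n (A : 'M[C]_n) (v : 'cV[C]_n) :
  psd A -> 0 <= complex.Re (qform A v).
Proof. by move=> hA; rewrite -ler0c psd_qform_real. Qed.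

Lemma psd_entry_eq0 n (A : 'M[C]_n) i j :
  psd A -> A i i = 0 -> A j j = 0 -> A i j = 0.
Proof.
move=> hA Aii Ajj; set x := A i j.
have form_ge0 c : 0 <= c * x + c^* * A j i.
  have := hA (delta_mx i 0 + c *: delta_mx j 0).
  by rewrite qform_pair Aii Ajj mulr0 addr0 add0r.
have Aji : A j i = - x.
  have sum0 : x + A j i = 0.
    apply/le_anti/andP; split; last by have := form_ge0 1; rewrite rmorph1 !mul1r.
    by have := form_ge0 (-1); rewrite rmorphN rmorph1 !mulN1r -opprD oppr_ge0.
  by apply/eqP; rewrite -addr_eq0 addrC sum0.
have ix_ge0 : 0 <= 'i%R * x *+ 2.
  by have := form_ge0 'i%R; rewrite Aji (conjCi C) mulrNN mulr2n.
have ix_le0 : 'i%R * x *+ 2 <= 0.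
  have := form_ge0 (- 'i%R); rewrite Aji rmorphN /= (conjCi C) opprK.
  by rewrite mulNr mulrN -opprD oppr_ge0 mulr2n.
have /eqP : 'i%R * x *+ 2 = 0 by apply/le_anti; rewrite ix_le0 ix_ge0.
by rewrite mulrn_eq0 /= mulf_eq0 (negPf (neq0Ci _)) => /eqP.
Qed.

Lemma psd_tr_eq0 n (A : 'M[C]_n) : psd A -> \tr A = 0 -> A = 0.
Proof.
move=> hA /eqP; rewrite psumr_eq0 => [/allP diag0|k _]; last exact: psd_diag_ge0.
have Akk k : A k k = 0 by apply/eqP/(implyP (diag0 k (mem_index_enum _))).
by apply/matrixP => i j; rewrite mxE psd_entry_eq0.
Qed.

Lemma lowner_scaleP n (c : R) (A B : 'M[C]_n) : psd A -> psd B ->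
  lowner A (c%:C *: B) <->
  forall v : 'cV[C]_n, complex.Re (qform A v) <= c * complex.Re (qform B v).
Proof.
move=> hA hB.
have formE (v : 'cV[C]_n) :
    qform (c%:C *: B - A) v = (c * complex.Re (qform B v) - complex.Re (qform A v))%:C.
  by rewrite qformB qformZ rmorphB rmorphM /= !psd_qform_real.
by split=> H v; [move: (H v) | ]; rewrite /= formE ler0c subr_ge0 //; apply: H.
Qed.

Definition orth_proj n (P : 'M[C]_n) := adj P = P /\ P *m P = P.

Lemma orth_proj_compl n (P : 'M[C]_n) : orth_proj P -> orth_proj (1%:M - P).
Proof.
case=> P_herm P_idem; split; first by rewrite adjD adjN adj1 P_herm.
by rewrite mulmxBl mul1mx mulmxBr mulmx1 P_idem subrr subr0.
Qed.

Lemma orth_proj_psd n (P : 'M[C]_n) : orth_proj P -> psd P.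
Proof. by case=> P_herm P_idem; rewrite -P_idem -{1}P_herm; apply: psd_gram. Qed.

Lemma orth_proj_tr_ge0 n (P A : 'M[C]_n) :
  orth_proj P -> psd A -> 0 <= \tr (A *m P).
Proof.
case=> P_herm P_idem hA.
rewrite -P_idem mulmxA mxtrace_mulC mulmxA -{1}P_herm.
exact/psd_tr_ge0/psd_conj.
Qed.

Lemma density_tr_orth_proj n (P A : 'M[C]_n) :
  orth_proj P -> density A -> 0 <= \tr (A *m P) <= 1.
Proof.
move=> hP [hA trA]; rewrite orth_proj_tr_ge0 //= -subr_ge0 -trA.
have := orth_proj_tr_ge0 (orth_proj_compl hP) hA.
by rewrite mulmxBr mulmx1 raddfB /=.
Qed.

Lemma supp_proj_spec n (rho : 'M[C]_n) : is_supp_proj rho (supp_proj rho).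
Proof.
apply: (@xgetPex _ 0 [set P | is_supp_proj rho P]).
pose U := schmidt (row_base rho).
have U_unitary : U *m adj U = 1%:M.
  exact/unitarymxP/schmidt_unitarymx/rank_leq_col.
have U_rho : (U :=: rho)%MS.
  exact: eqmx_trans (eqmx_schmidt_free (row_base_free _)) (eq_row_base _).
exists (adj U *m U); split; [by rewrite adjM adjK | split].
  by rewrite mulmxA -(mulmxA (adj U)) U_unitary mulmx1.
apply/andP; split; rewrite -U_rho; first exact: submxMl.
by rewrite -{1}[U]mul1mx -U_unitary -mulmxA submxMl.
Qed.

Lemma orth_proj_supp n (rho : 'M[C]_n) : orth_proj (supp_proj rho).
Proof. by have [? [? _]] := supp_proj_spec rho. Qed.

Lemma mulmx_supp_proj n (rho : 'M[C]_n) : rho *m supp_proj rho = rho.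
Proof.
have [_ [P_idem /andP[_ /submxP[D rhoE]]]] := supp_proj_spec rho.
by move: P_idem rhoE; set P := supp_proj rho => P_idem ->; rewrite -mulmxA P_idem.
Qed.

Lemma density_mix_complement n (rho sigma : 'M[C]_n) (t : R) :
  density rho -> density sigma -> t <= 1 -> lowner (t%:C *: rho) sigma ->
  exists gamma, density gamma /\ sigma = t%:C *: rho + (1 - t)%:C *: gamma.
Proof.
move=> d_rho d_sigma; have [_ tr_rho] := d_rho; have [_ tr_sigma] := d_sigma.
rewrite le_eqVlt => /orP[/eqP t1 | t_lt1] low.
  have sigma_rho : sigma - rho = 0.
    apply: psd_tr_eq0; last by rewrite raddfB /= tr_rho tr_sigma subrr.
    by move: low; rewrite /lowner t1 rmorph1 scale1r.
  have -> : sigma = rho by apply/eqP; rewrite -subr_eq0 sigma_rho.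
  exists rho; split=> //.
  by rewrite t1 subrr rmorph0 scale0r addr0 rmorph1 scale1r.
have t1_neq0 : 1 - t != 0 by rewrite subr_eq0 gt_eqF.
exists ((1 - t)^-1%:C *: (sigma - t%:C *: rho)); split; last first.
  by rewrite scalerA -rmorphM mulfV // scale1r addrC subrK.
split; first by apply: psdZ; rewrite // ler0c invr_ge0 subr_ge0 ltW.
rewrite mxtraceZ raddfB /= mxtraceZ tr_rho tr_sigma mulr1.
have -> : 1 - t%:C = (1 - t)%:C by rewrite rmorphB rmorph1.
by rewrite -rmorphM mulVf.
Qed.

Lemma test_prepare_density d1 d2 (g1 g2 : 'M[C]_d2) (E X : 'M[C]_d1) :
  density X ->
  test_prepare g1 g2 E X = \tr (X *m E) *: g1 + (1 - \tr (X *m E)) *: g2.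
Proof.
case=> _ trX.
by rewrite /test_prepare mulmxBl mul1mx raddfB /= trX mxtrace_mulC.
Qed.

Lemma test_prepare_supp_proj d1 d2 (g1 g2 : 'M[C]_d2) (rho : 'M[C]_d1) :
  density rho -> test_prepare g1 g2 (supp_proj rho) rho = g1.
Proof.
move=> d_rho; have [_ tr_rho] := d_rho.
by rewrite test_prepare_density // mulmx_supp_proj tr_rho subrr scale0r addr0 scale1r.
Qed.

Lemma is_test_prepare_supp_proj d1 d2 (g1 g2 : 'M[C]_d2) (rho : 'M[C]_d1) :
  density g1 -> density g2 ->
  is_test_prepare (test_prepare g1 g2 (supp_proj rho)).
Proof.
move=> dg1 dg2; have hP := orth_proj_supp rho.
exists g1, g2, (supp_proj rho); do 2!split=> //.
split; first exact: orth_proj_psd.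
by split=> //; apply: orth_proj_psd (orth_proj_compl hP).
Qed.

Lemma pow2_log2 (x : R) : 0 < x -> 2 `^ log2 x = x.
Proof.
move=> x_gt0; have ln2_neq0 : ln (2 : R) != 0 by rewrite gt_eqF // ln_gt0 // ltr1n.
by apply: ln_inj; rewrite ?posrE ?powR_gt0 // ln_powR /log2 divfK.
Qed.

Lemma log2_pow2 (x : R) : log2 (2 `^ x) = x.
Proof. by rewrite /log2 ln_powR mulfK // gt_eqF // ln_gt0 // ltr1n. Qed.

Lemma ltr_log2 : {in Num.pos &, {mono @log2 R : x y / x < y}}.
Proof.
move=> x y x_gt0 y_gt0.
by rewrite /log2 ltr_pM2r ?invr_gt0 ?ln_gt0 ?ltr1n // ltr_ln.
Qed.

Lemma ler_pow2M_of_gt (L a b : R) : 0 <= a ->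
  (forall L', L < L' -> b <= 2 `^ L' * a) -> b <= 2 `^ L * a.
Proof.
move=> a_ge0 hb; apply/ler_addgt0Pr => e e_gt0.
have [a0 | a_neq0] := eqVneq a 0.
  subst a; rewrite mulr0 add0r (le_trans (hb (L + 1) _)) ?mulr0 ?ltW ?ltrDl //.
have a_gt0 : 0 < a by rewrite lt_def a_neq0.
set z := 2 `^ L * a + e.
have z_gt0 : 0 < z by rewrite ltr_wpDl // mulr_ge0 ?powR_ge0.
have := hb (log2 (z / a)); rewrite pow2_log2 ?divr_gt0 // divfK ?gt_eqF //; apply.
rewrite -{1}(log2_pow2 L) ltr_log2 ?posrE ?powR_gt0 ?divr_gt0 //.
by rewrite ltr_pdivlMr // ltrDl.
Qed.

Lemma lowner_of_Dmax_lt n (rho sigma : 'M[C]_n) (L : R) : psd sigma ->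
  (Dmax rho sigma < L%:E)%E -> lowner rho ((2 `^ L)%:C *: sigma).
Proof.
move=> hsigma /ereal_inf_lt[_ [lam low <-]]; rewrite lte_fin => lam_lt.
rewrite /lowner -[_ *: sigma](subrK ((2 `^ lam)%:C *: sigma)) -addrA -scalerBl.
apply: psdD (psdZ _ hsigma) low.
by rewrite -rmorphB ler0c subr_ge0 ler_powR ?ler1n ?ltW.
Qed.

Lemma lowner_of_Dmax_le n (rho sigma : 'M[C]_n) (L : R) :
  psd rho -> psd sigma ->
  (Dmax rho sigma <= L%:E)%E -> lowner rho ((2 `^ L)%:C *: sigma).
Proof.
move=> hrho hsigma hD; apply/lowner_scaleP => // v.
apply: ler_pow2M_of_gt => [|L' lt_L]; first exact: psd_Re_qform_ge0.
have low : lowner rho ((2 `^ L')%:C *: sigma).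
  by apply: lowner_of_Dmax_lt; rewrite // (le_lt_trans hD) ?lte_fin.
by move/lowner_scaleP: low; apply.
Qed.

Lemma lowner_of_Dmax_le_log2 n (rho sigma : 'M[C]_n) (t : R) : 0 < t ->
  psd rho -> psd sigma -> (Dmax rho sigma <= (- log2 t)%:E)%E ->
  lowner (t%:C *: rho) sigma.
Proof.
move=> t_gt0 hrho hsigma /(lowner_of_Dmax_le hrho hsigma).
rewrite powRN pow2_log2 // /lowner => low.
have -> : sigma - t%:C *: rho = t%:C *: ((t^-1)%:C *: sigma - rho).
  by rewrite scalerBr scalerA -rmorphM mulfV ?lt0r_neq0 // rmorph1 scale1r.
by apply: psdZ; rewrite ?ler0c ?ltW.
Qed.

Lemma test_prepare_of_Dmax_le_Dmin d1 d2
  (rho1 sigma1 : 'M[C]_d1) (rho2 sigma2 : 'M[C]_d2) :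
  density rho1 -> density sigma1 -> density rho2 -> density sigma2 ->
  (Dmax rho2 sigma2 <= Dmin rho1 sigma1)%E ->
  exists Ch : 'M[C]_d1 -> 'M[C]_d2,
    is_test_prepare Ch /\ Ch rho1 = rho2 /\ Ch sigma1 = sigma2.
Proof.
move=> d_rho1 d_sigma1 d_rho2 d_sigma2; rewrite /Dmin.
have /andP[T_ge0 T_le1] := density_tr_orth_proj (orth_proj_supp rho1) d_sigma1.
set Q := supp_proj rho1 in T_ge0 T_le1 *.
set T := \tr (sigma1 *m Q) in T_ge0 T_le1 *.
have TE : T = (complex.Re T)%:C by rewrite RRe_real // ger0_real.
set t := complex.Re T in TE *; move=> hD.
have t_le1 : t <= 1 by rewrite -lecR -TE.
have low : lowner (t%:C *: rho2) sigma2.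
  have [t0 | t_neq0] := eqVneq t 0.
    by rewrite t0 scale0r /lowner subr0; case: d_sigma2.
  apply: lowner_of_Dmax_le_log2; [| by case: d_rho2 | by case: d_sigma2 |].
    by rewrite lt_def t_neq0 -ler0c -TE.
  by move: hD; rewrite (negPf t_neq0).
have [gamma [d_gamma sigma2E]] := density_mix_complement d_rho2 d_sigma2 t_le1 low.
exists (test_prepare rho2 gamma Q); split; first exact: is_test_prepare_supp_proj.
split; first exact: test_prepare_supp_proj.
by rewrite test_prepare_density // -/T TE sigma2E rmorphB.
Qed.

End QuantumStates.

Theorem corollary1 (R : realType) (d1 d2 : nat)
  (rho1 sigma1 : 'M[R[i]]_d1) (rho2 sigma2 : 'M[R[i]]_d2) :
  density rho1 -> density sigma1 -> density rho2 -> density sigma2 ->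
  ((Dmax rho2 sigma2 <= Dmin rho1 sigma1)%E \/
   (Dmax sigma2 rho2 <= Dmin sigma1 rho1)%E) ->
  exists Ch : 'M[R[i]]_d1 -> 'M[R[i]]_d2,
    is_test_prepare Ch /\ Ch rho1 = rho2 /\ Ch sigma1 = sigma2.
Proof.
move=> d_rho1 d_sigma1 d_rho2 d_sigma2 [hD | hD].
  exact: test_prepare_of_Dmax_le_Dmin.
have [Ch [hCh [Ch_sigma1 Ch_rho1]]] :=
  test_prepare_of_Dmax_le_Dmin d_sigma1 d_rho1 d_sigma2 d_rho2 hD.
by exists Ch.
Qed.
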